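(* The inequality $\lambda_s(a,b)\le H(a,b)$ holds for all $a,b>0$ if and only if $s\le -4$.
   Context: For $a,b>0$ with $a\neq b$ define $$\lambda_s(a,b)=\begin{cases}\dfrac{s-1}{s+1}\cdot\dfrac{a^{s+1}+b^{s+1}-2\left(\frac{a+b}{2}\right)^{s+1}}{a^s+b^s-2\left(\frac{a+b}{2}\right)^s}, & s\in\mathbb{R}\setminus\{-1,0,1\},\\[3mm] \dfrac{2\log\frac{a+b}{2}-\log a-\log b}{\frac{1}{2a}+\frac{1}{2b}-\frac{2}{a+b}}, & s=-1,\\[3mm] \dfrac{a\log a+b\log b-(a+b)\log\frac{a+b}{2}}{2\log\frac{a+b}{2}-\log a-\log b}, & s=0,\\[3mm] \dfrac{(b-a)^2}{4\left(a\log a+b\log b-(a+b)\log\frac{a+b}{2}\right)}, & s=1,\end{cases}$$ and $\lambda_s(a,a)=a$. The harmonic mean is $H(a,b)=2(1/a+1/b)^{-1}$. *)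

From Stdlib Require Import Reals.
Open Scope R_scope.

Definition lambda (s a b : R) : R :=
  if Req_EM_T a b then a
  else
  let m := (a + b) / 2 in
  if Req_EM_T s (-1) then
    (2 * ln m - ln a - ln b) / (1 / (2 * a) + 1 / (2 * b) - 2 / (a + b))
  else if Req_EM_T s 0 then
    (a * ln a + b * ln b - (a + b) * ln m) / (2 * ln m - ln a - ln b)
  else if Req_EM_T s 1 then
    (b - a) ^ 2 / (4 * (a * ln a + b * ln b - (a + b) * ln m))
  else
    (s - 1) / (s + 1) *
    ((Rpower a (s + 1) + Rpower b (s + 1) - 2 * Rpower m (s + 1)) /
     (Rpower a s + Rpower b s - 2 * Rpower m s)).

Definition harmonic (a b : R) : R := 2 / (1 / a + 1 / b).

From Stdlib Require Import Reals Lra Psatz.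
From Coquelicot Require Import Coquelicot.
Open Scope R_scope.

(* Both means are homogeneous of degree 1, so for a < b we write
   a = m(1-t), b = m(1+t) with m > 0, 0 < t < 1.  Putting U = (1+t)^s,
   V = (1-t)^s, den = U + V - 2 and num = (1+t)U + (1-t)V - 2, the generic
   branch of lambda equals m (s-1)/(s+1) num/den, H equals m(1-t^2), and
     lambda - H = - m G / den,   G = (1-t^2) den - (s-1)/(s+1) num.
   The sign of den is that of s(s-1).  G vanishes at t = 0 together with its
   first two derivatives, and its third derivative G3 has slope
   -4 s (s+4) (s-1) at 0.
   - If s <= -4, then G3 >= 0 on (0,1) (the delicate case uses the bound
     ((1+t)/(1-t))^n <= (1+nt)/(1-nt) for n = 2 - s), hence G >= 0, den > 0
     and lambda <= H.
   - If s > -4 and s is not in {-1,0,1}, then G3 has the sign of its slope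
     near 0, so G/den < 0 for small t and lambda > H there; the three
     exceptional exponents are refuted by explicit numerical pairs. *)

Lemma nonneg_of_deriv_nonneg (F F' : R -> R) (T : R) :
  (forall x, 0 <= x < T -> is_derive F x (F' x)) ->
  (forall x, 0 < x < T -> 0 <= F' x) -> F 0 = 0 ->
  forall x, 0 <= x < T -> 0 <= F x.
Proof.
  intros dF HF' F0 x Hx.
  destruct (Req_dec x 0) as [->|Hx0]; [lra|].
  destruct (MVT_cor2 F F' 0 x) as (c & Hmvt & Hc); [lra| |].
  - intros c Hc. apply is_derive_Reals, dF. lra.
  - assert (0 <= F' c) by (apply HF'; lra). nra.
Qed.

Lemma pos_of_deriv_pos (F F' : R -> R) (T : R) :
  (forall x, 0 <= x < T -> is_derive F x (F' x)) ->
  (forall x, 0 < x < T -> 0 < F' x) -> F 0 = 0 ->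
  forall x, 0 < x < T -> 0 < F x.
Proof.
  intros dF HF' F0 x Hx.
  destruct (MVT_cor2 F F' 0 x) as (c & Hmvt & Hc); [lra| |].
  - intros c Hc. apply is_derive_Reals, dF. lra.
  - assert (0 < F' c) by (apply HF'; lra). nra.
Qed.

Lemma nonneg_of_third_deriv (F F1 F2 F3 : R -> R) (T : R) :
  (forall x, 0 <= x < T -> is_derive F x (F1 x)) ->
  (forall x, 0 <= x < T -> is_derive F1 x (F2 x)) ->
  (forall x, 0 <= x < T -> is_derive F2 x (F3 x)) ->
  F 0 = 0 -> F1 0 = 0 -> F2 0 = 0 ->
  (forall x, 0 < x < T -> 0 <= F3 x) ->
  forall x, 0 <= x < T -> 0 <= F x.
Proof.
  intros dF dF1 dF2 F0 F10 F20 HF3.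
  assert (HF2 := nonneg_of_deriv_nonneg F2 F3 T dF2 HF3 F20).
  assert (HF1 : forall x, 0 <= x < T -> 0 <= F1 x).
  { apply (nonneg_of_deriv_nonneg F1 F2 T dF1); [|exact F10].
    intros x Hx. apply HF2. lra. }
  apply (nonneg_of_deriv_nonneg F F1 T dF); [|exact F0].
  intros x Hx. apply HF1. lra.
Qed.

Lemma pos_of_third_deriv (F F1 F2 F3 : R -> R) (T : R) :
  (forall x, 0 <= x < T -> is_derive F x (F1 x)) ->
  (forall x, 0 <= x < T -> is_derive F1 x (F2 x)) ->
  (forall x, 0 <= x < T -> is_derive F2 x (F3 x)) ->
  F 0 = 0 -> F1 0 = 0 -> F2 0 = 0 ->
  (forall x, 0 < x < T -> 0 < F3 x) ->
  forall x, 0 < x < T -> 0 < F x.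
Proof.
  intros dF dF1 dF2 F0 F10 F20 HF3.
  apply (pos_of_deriv_pos F F1 T dF); [|exact F0].
  apply (pos_of_deriv_pos F1 F2 T dF1); [|exact F10].
  exact (pos_of_deriv_pos F2 F3 T dF2 HF3 F20).
Qed.

Lemma pos_right_of_zero (F : R -> R) (L : R) :
  F 0 = 0 -> is_derive F 0 L -> 0 < L ->
  exists d, 0 < d < 1 /\ forall t, 0 < t < d -> 0 < F t.
Proof.
  intros F0 dF HL.
  apply is_derive_Reals in dF.
  destruct (dF L HL) as [delta Hdelta].
  exists (Rmin delta (1 / 2)). split.
  - split; [apply Rmin_pos; [apply cond_pos | lra]|].
    apply Rle_lt_trans with (1 / 2); [apply Rmin_r | lra].
  - intros t Ht.
    assert (Ht_delta : t < delta) by (eapply Rlt_le_trans; [apply Ht | apply Rmin_l]).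
    assert (Hq : Rabs ((F (0 + t) - F 0) / t - L) < L).
    { apply Hdelta; [lra|]. rewrite Rabs_pos_eq; lra. }
    rewrite Rplus_0_l, F0, Rminus_0_r in Hq.
    apply Rabs_def2 in Hq.
    assert (Hslope : 0 < F t / t) by lra.
    replace (F t) with (F t / t * t) by (field; lra).
    apply Rmult_lt_0_compat; lra.
Qed.

Lemma exp_le_compat x y : x <= y -> exp x <= exp y.
Proof. intros [Hlt|Heq]; [left; apply exp_increasing, Hlt | rewrite Heq; right; reflexivity]. Qed.

Lemma Rpower_1_base e : Rpower 1 e = 1.
Proof. unfold Rpower. rewrite ln_1, Rmult_0_r. apply exp_0. Qed.

Lemma Rpower_succ x e : 0 < x -> Rpower x (e + 1) = Rpower x e * x.
Proof. intros Hx. rewrite Rpower_plus, Rpower_1 by exact Hx. reflexivity. Qed.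

Lemma Rpower_base_sign e x y : e <> 0 -> 0 < x < y -> 0 < e * (Rpower y e - Rpower x e).
Proof.
  intros He Hxy. unfold Rpower.
  assert (Hln : ln x < ln y) by (apply ln_increasing; lra).
  destruct (Rlt_or_le 0 e) as [Hpos|Hneg].
  - assert (exp (e * ln x) < exp (e * ln y)) by (apply exp_increasing; nra). nra.
  - assert (exp (e * ln y) < exp (e * ln x)) by (apply exp_increasing; nra). nra.
Qed.

Lemma ln_lt_sub1 x : 0 < x -> x <> 1 -> ln x < x - 1.
Proof.
  intros Hx Hx1.
  assert (Hneq : ln x <> 0) by (apply ln_neq_0; assumption).
  assert (H := exp_ineq1 (ln x) Hneq). rewrite exp_ln in H by exact Hx. lra.
Qed.

Lemma ln_gt_1_sub_inv x : 0 < x -> x <> 1 -> 1 - / x < ln x.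
Proof.
  intros Hx Hx1.
  assert (Hinv : / x <> 1).
  { intro H. apply Hx1. rewrite <- (Rinv_inv x), H. apply Rinv_1. }
  assert (H := ln_lt_sub1 (/ x) (Rinv_0_lt_compat x Hx) Hinv).
  rewrite ln_Rinv in H by exact Hx. lra.
Qed.

(* Superlinearity of artanh: artanh(n t) >= n artanh(t) for n >= 1, since the
   derivative difference is 2 n x^2 (n^2-1) / ((1-n^2x^2)(1-x^2)) >= 0. *)
Lemma ln_ratio_superlinear n t : 1 <= n -> 0 <= t -> n * t < 1 ->
  n * (ln (1 + t) - ln (1 - t)) <= ln (1 + n * t) - ln (1 - n * t).
Proof.
  intros Hn Ht Hnt.
  set (F := fun x => ln (1 + n * x) - ln (1 - n * x) - n * (ln (1 + x) - ln (1 - x))).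
  set (F' := fun x => 2 * n * x ^ 2 * (n ^ 2 - 1)
                      / ((1 - n * x) * (1 + n * x) * (1 - x) * (1 + x))).
  assert (Hdom : forall x, 0 <= x < / n -> 0 <= x /\ x <= n * x /\ n * x < 1).
  { intros x Hx. assert (n * / n = 1) by (field; lra). nra. }
  assert (HF : forall x, 0 <= x < / n -> 0 <= F x).
  { apply (nonneg_of_deriv_nonneg F F').
    - intros x Hx. specialize (Hdom x Hx).
      unfold F, F'. auto_derive; [repeat split; lra|].
      replace (1 + - x) with (1 - x) by ring.
      replace (1 + - (n * x)) with (1 - n * x) by ring.
      field. repeat split; lra.
    - intros x Hx. assert (Hx' := Hdom x ltac:(lra)).
      unfold F'. apply Rdiv_le_0_compat; [|repeat apply Rmult_lt_0_compat; lra].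
      assert (0 <= n ^ 2 - 1) by nra.
      repeat apply Rmult_le_pos; nra.
    - unfold F. rewrite !Rmult_0_r, Rplus_0_r, Rminus_0_r, ln_1. ring. }
  assert (Ht_inv : t < / n).
  { apply (Rmult_lt_reg_l n); [lra|]. rewrite Rinv_r; lra. }
  specialize (HF t (conj Ht Ht_inv)). unfold F in HF. lra.
Qed.

Lemma power_ratio_bound n t : 1 <= n -> 0 <= t -> n * t < 1 ->
  Rpower (1 - t) (- n) * (1 - n * t) <= Rpower (1 + t) (- n) * (1 + n * t).
Proof.
  intros Hn Ht Hnt.
  assert (Hlog := ln_ratio_superlinear n t Hn Ht Hnt).
  assert (Hnt' : 0 < 1 + n * t) by nra.
  unfold Rpower.
  rewrite <- (exp_ln (1 - n * t)), <- (exp_ln (1 + n * t)) by lra.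
  rewrite <- !exp_plus. apply exp_le_compat. lra.
Qed.

(* Normalized data: U = (1+t)^s, V = (1-t)^s; den and num are the normalized
   denominator and numerator of lambda_s(1-t, 1+t). *)
Definition U (s t : R) : R := Rpower (1 + t) s.
Definition V (s t : R) : R := Rpower (1 - t) s.
Definition den (s t : R) : R := U s t + V s t - 2.
Definition num (s t : R) : R := (1 + t) * U s t + (1 - t) * V s t - 2.

(* G measures H - lambda (times den/m); G1, G2, G3 are its successive derivatives. *)
Definition G (s t : R) : R := (1 - t ^ 2) * den s t - (s - 1) / (s + 1) * num s t.
Definition G1 (s t : R) : R :=
  U s t * (1 - (s + 2) * t) - V s t * (1 + (s + 2) * t) + 4 * t.
Definition G2 (s t : R) : R :=
  Rpower (1 + t) (s - 1) * (-2 - (s + 1) * (s + 2) * t)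
  + Rpower (1 - t) (s - 1) * (-2 + (s + 1) * (s + 2) * t) + 4.
Definition G3 (s t : R) : R :=
  Rpower (1 - t) (s - 2) * (s * (s + 5) - s * (s + 1) * (s + 2) * t)
  - Rpower (1 + t) (s - 2) * (s * (s + 5) + s * (s + 1) * (s + 2) * t).

(* x^(f+1) = x^f * x, in the exp/ln form produced by differentiation. *)
Lemma exp_ln_succ x e f : 0 < x -> e = f + 1 -> exp (e * ln x) = exp (f * ln x) * x.
Proof.
  intros Hx Hef. rewrite Hef, Rmult_plus_distr_r, exp_plus, Rmult_1_l, exp_ln by exact Hx.
  reflexivity.
Qed.

(* The derivative chain G -> G1 -> G2 -> G3 on (-1,1); the first step needs
   s <> -1 so that (s-1)/(s+1) is the genuine coefficient. *)
Lemma derive_G s t : s <> -1 -> -1 < t < 1 -> is_derive (G s) t (G1 s t).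
Proof.
  intros Hs Ht. unfold G, G1, den, num, U, V, Rpower. auto_derive; [lra|].
  replace (1 + - t) with (1 - t) by ring. field. lra.
Qed.

Lemma derive_G1 s t : -1 < t < 1 -> is_derive (G1 s) t (G2 s t).
Proof.
  intros Ht. unfold G1, G2, U, V, Rpower. auto_derive; [lra|].
  replace (1 + - t) with (1 - t) by ring.
  rewrite (exp_ln_succ (1 + t) s (s - 1)), (exp_ln_succ (1 - t) s (s - 1)) by lra.
  field. lra.
Qed.

Lemma derive_G2 s t : -1 < t < 1 -> is_derive (G2 s) t (G3 s t).
Proof.
  intros Ht. unfold G2, G3, Rpower. auto_derive; [lra|].
  replace (1 + - t) with (1 - t) by ring.
  rewrite (exp_ln_succ (1 + t) (s - 1) (s - 2)), (exp_ln_succ (1 - t) (s - 1) (s - 2)) by lra.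
  field. lra.
Qed.

(* The slope of G3 at 0 decides the local sign of G. *)
Lemma derive_G3_0 s : is_derive (G3 s) 0 (-4 * s * (s + 4) * (s - 1)).
Proof.
  unfold G3, Rpower. auto_derive; [lra|].
  rewrite Ropp_0, Rplus_0_r, ln_1, Rmult_0_r, exp_0.
  field.
Qed.

Lemma G_chain_at_0 s : G s 0 = 0 /\ G1 s 0 = 0 /\ G2 s 0 = 0 /\ G3 s 0 = 0.
Proof.
  unfold G, G1, G2, G3, den, num, U, V.
  rewrite Rplus_0_r, Rminus_0_r, !Rpower_1_base.
  repeat split; ring.
Qed.

(* With K = s(s+5) and
   r = s(s+1)(s+2) < 0, G3 = b (K - r t) - a (K + r t) where
   a = (1+t)^(s-2) < b = (1-t)^(s-2).  Only the case K - r t < 0 is delicate;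
   there power_ratio_bound for n = 2 - s combines with n (-K) <= -r, which
   reads 2 s (s+4) (s-1) <= 0. *)
Lemma G3_nonneg s t : s <= -4 -> 0 < t < 1 -> 0 <= G3 s t.
Proof.
  intros Hs Ht. unfold G3.
  set (a := Rpower (1 + t) (s - 2)). set (b := Rpower (1 - t) (s - 2)).
  set (K := s * (s + 5)). set (r := s * (s + 1) * (s + 2)).
  assert (Ha : 0 < a) by apply exp_pos.
  assert (Hab : a < b).
  { assert (H := Rpower_base_sign (s - 2) (1 - t) (1 + t) ltac:(lra) ltac:(lra)).
    fold a b in H. nra. }
  assert (Hr : r < 0).
  { assert (0 < (s + 1) * (s + 2)) by nra. unfold r. nra. }
  assert (Hrtb : 0 < - r * t * b) by (apply Rmult_lt_0_compat; nra).
  destruct (Rle_or_lt 0 (K + r * t)) as [HQ|HQ]; [nra|].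
  destruct (Rle_or_lt 0 (K - r * t)) as [HP|HP]; [nra|].
  set (n := 2 - s).
  assert (Hkey : n * (- K) <= - r).
  { unfold n, K, r.
    replace (- (s * (s + 1) * (s + 2)) - (2 - s) * - (s * (s + 5)))
      with (- 2 * s * (s + 4) * (s - 1)) by ring.
    nra. }
  assert (Hnt : n * t < 1) by (unfold n in *; nra).
  assert (Hratio : b * (1 - n * t) <= a * (1 + n * t)).
  { unfold a, b. replace (s - 2) with (- n) by (unfold n; ring).
    apply power_ratio_bound; unfold n in *; lra. }
  assert (Hpoly : (1 + n * t) * (- (K - r * t)) <= (1 - n * t) * (- (K + r * t))) by nra.
  assert (Hscaled : b * (- (K - r * t)) * (1 + n * t) <= a * (- (K + r * t)) * (1 + n * t)) by nra.
  assert (0 < 1 + n * t) by (unfold n in *; nra).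
  nra.
Qed.

Lemma G_nonneg s t : s <= -4 -> 0 <= t < 1 -> 0 <= G s t.
Proof.
  intros Hs Ht. destruct (G_chain_at_0 s) as (G0 & G10 & G20 & _).
  apply (nonneg_of_third_deriv (G s) (G1 s) (G2 s) (G3 s) 1); auto.
  - intros x Hx. apply derive_G; lra.
  - intros x Hx. apply derive_G1; lra.
  - intros x Hx. apply derive_G2; lra.
  - intros x Hx. apply G3_nonneg; lra.
Qed.

Lemma G_sign_near_0 s : s <> -1 -> -4 * s * (s + 4) * (s - 1) <> 0 ->
  exists t, 0 < t < 1 /\ 0 < (-4 * s * (s + 4) * (s - 1)) * G s t.
Proof.
  intros Hs1 HD. set (D := -4 * s * (s + 4) * (s - 1)) in *.
  destruct (G_chain_at_0 s) as (G0 & G10 & G20 & G30).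
  destruct (pos_right_of_zero (fun x => D * G3 s x) (D * D)) as (d & Hd & HG3).
  - rewrite G30. ring.
  - apply is_derive_scal, derive_G3_0.
  - apply Rsqr_pos_lt, HD.
  - exists (d / 2). split; [lra|].
    apply (pos_of_third_deriv (fun x => D * G s x) (fun x => D * G1 s x)
             (fun x => D * G2 s x) (fun x => D * G3 s x) d); try lra.
    + intros x Hx. apply is_derive_scal, derive_G; lra.
    + intros x Hx. apply is_derive_scal, derive_G1; lra.
    + intros x Hx. apply is_derive_scal, derive_G2; lra.
    + rewrite G0. ring.
    + rewrite G10. ring.
    + rewrite G20. ring.
    + exact HG3.
Qed.

Lemma derive_den s t : -1 < t < 1 ->
  is_derive (den s) t (s * (Rpower (1 + t) (s - 1) - Rpower (1 - t) (s - 1))).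
Proof.
  intros Ht. unfold den, U, V, Rpower. auto_derive; [lra|].
  replace (1 + - t) with (1 - t) by ring.
  rewrite (exp_ln_succ (1 + t) s (s - 1)), (exp_ln_succ (1 - t) s (s - 1)) by lra.
  field. lra.
Qed.

(* den has the sign of s (s - 1), since den' = s ((1+t)^(s-1) - (1-t)^(s-1)). *)
Lemma den_sign s t : s <> 0 -> s <> 1 -> 0 < t < 1 -> 0 < s * (s - 1) * den s t.
Proof.
  intros Hs0 Hs1 Ht.
  apply (pos_of_deriv_pos (fun x => s * (s - 1) * den s x)
           (fun x => s * (s - 1) * (s * (Rpower (1 + x) (s - 1) - Rpower (1 - x) (s - 1)))) 1);
    [| |unfold den, U, V; rewrite Rplus_0_r, Rminus_0_r, !Rpower_1_base; ring | exact Ht].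
  - intros x Hx. apply is_derive_scal, derive_den. lra.
  - intros x Hx.
    assert (Hmono := Rpower_base_sign (s - 1) (1 - x) (1 + x) ltac:(lra) ltac:(lra)).
    assert (0 < s * s) by nra. nra.
Qed.

Definition lambda_gen (s a b : R) : R :=
  (s - 1) / (s + 1) *
  ((Rpower a (s + 1) + Rpower b (s + 1) - 2 * Rpower ((a + b) / 2) (s + 1)) /
   (Rpower a s + Rpower b s - 2 * Rpower ((a + b) / 2) s)).

Lemma lambda_generic s a b : a <> b -> s <> -1 -> s <> 0 -> s <> 1 ->
  lambda s a b = lambda_gen s a b.
Proof.
  intros Hab Hs1 Hs0 Hs1'. unfold lambda.
  destruct (Req_EM_T a b); [contradiction|].
  destruct (Req_EM_T s (-1)); [contradiction|].
  destruct (Req_EM_T s 0); [contradiction|].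
  destruct (Req_EM_T s 1); [contradiction|].
  reflexivity.
Qed.

Lemma lambda_gen_sym s a b : lambda_gen s a b = lambda_gen s b a.
Proof.
  unfold lambda_gen. rewrite (Rplus_comm b a), (Rplus_comm (Rpower b (s + 1))),
    (Rplus_comm (Rpower b s)). reflexivity.
Qed.

Lemma harmonic_sym a b : harmonic a b = harmonic b a.
Proof. unfold harmonic. rewrite Rplus_comm. reflexivity. Qed.

Lemma lambda_gen_normalized s m t : s <> -1 -> s <> 0 -> s <> 1 -> 0 < m -> 0 < t < 1 ->
  lambda_gen s (m * (1 - t)) (m * (1 + t))
  = harmonic (m * (1 - t)) (m * (1 + t)) - m * (G s t / den s t).
Proof.
  intros Hs1 Hs0 Hs1' Hm Ht.
  assert (Hden : den s t <> 0) by (assert (H := den_sign s t Hs0 Hs1' Ht); intro; nra).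
  assert (HM : 0 < Rpower m s) by apply exp_pos.
  unfold lambda_gen, harmonic, G, num.
  replace ((m * (1 - t) + m * (1 + t)) / 2) with m by field.
  rewrite <- !Rpower_mult_distr by lra. rewrite !Rpower_succ by lra.
  fold (U s t) (V s t).
  replace (Rpower m s * V s t + Rpower m s * U s t - 2 * Rpower m s)
    with (Rpower m s * den s t) by (unfold den; ring).
  field. repeat split; lra.
Qed.

Lemma normal_form a b : 0 < a < b ->
  exists m t, 0 < m /\ 0 < t < 1 /\ a = m * (1 - t) /\ b = m * (1 + t).
Proof.
  intros Hab. exists ((a + b) / 2), ((b - a) / (a + b)).
  split; [lra|]. split; [split|].
  - apply Rdiv_lt_0_compat; lra.
  - apply Rlt_div_l; lra.
  - split; field; lra.
Qed.

Lemma lambda_gen_le_harmonic s a b : s <= -4 -> 0 < a < b ->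
  lambda_gen s a b <= harmonic a b.
Proof.
  intros Hs Hab.
  destruct (normal_form a b Hab) as (m & t & Hm & Ht & -> & ->).
  rewrite lambda_gen_normalized by lra.
  assert (HG := G_nonneg s t Hs ltac:(lra)).
  assert (Hden := den_sign s t ltac:(lra) ltac:(lra) Ht).
  assert (0 < den s t) by nra.
  assert (0 <= G s t / den s t) by (apply Rdiv_le_0_compat; lra).
  nra.
Qed.

Lemma sufficiency s a b : s <= -4 -> 0 < a -> 0 < b -> lambda s a b <= harmonic a b.
Proof.
  intros Hs Ha Hb.
  destruct (Req_dec a b) as [<-|Hab].
  - unfold lambda, harmonic. destruct (Req_EM_T a a) as [_|]; [|contradiction].
    right. field. lra.
  - rewrite lambda_generic by lra.
    destruct (Rlt_or_le a b).
    + apply lambda_gen_le_harmonic; lra.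
    + rewrite lambda_gen_sym, harmonic_sym. apply lambda_gen_le_harmonic; lra.
Qed.

Lemma counterexample_generic s : -4 < s -> s <> -1 -> s <> 0 -> s <> 1 ->
  exists a b, 0 < a /\ 0 < b /\ harmonic a b < lambda s a b.
Proof.
  intros Hs4 Hs1 Hs0 Hs1'.
  assert (Hp : s * (s - 1) <> 0) by (intro H; apply Rmult_integral in H; lra).
  assert (HD : -4 * s * (s + 4) * (s - 1) <> 0).
  { replace (-4 * s * (s + 4) * (s - 1)) with (-4 * (s + 4) * (s * (s - 1))) by ring.
    apply Rmult_integral_contrapositive_currified; [lra | exact Hp]. }
  destruct (G_sign_near_0 s Hs1 HD) as (t & Ht & HG).
  assert (Hden := den_sign s t Hs0 Hs1' Ht).
  exists (1 * (1 - t)), (1 * (1 + t)). split; [lra|]. split; [lra|].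
  rewrite lambda_generic, lambda_gen_normalized by lra.
  enough (G s t / den s t < 0) by lra.
  replace (-4 * s * (s + 4) * (s - 1)) with (-4 * (s + 4) * (s * (s - 1))) in HG by ring.
  set (p := s * (s - 1)) in *. clearbody p.
  assert (HpG : p * G s t < 0) by nra.
  destruct (Rlt_or_le 0 p) as [Hpos|Hneg].
  - apply Rdiv_neg_pos; nra.
  - apply Rdiv_pos_neg; nra.
Qed.

(* lambda_{-1}(1/2, 3/2) = 3 ln(4/3) > 3/4 = H(1/2, 3/2). *)
Lemma counterexample_m1 : exists a b, 0 < a /\ 0 < b /\ harmonic a b < lambda (-1) a b.
Proof.
  exists (1 / 2), (3 / 2). split; [lra|]. split; [lra|].
  unfold lambda, harmonic.
  destruct (Req_EM_T (1 / 2) (3 / 2)); [lra|].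
  destruct (Req_EM_T (-1) (-1)); [|lra].
  replace ((1 / 2 + 3 / 2) / 2) with 1 by field. rewrite ln_1.
  assert (Hsum : ln (1 / 2) + ln (3 / 2) = ln (3 / 4)) by (rewrite <- ln_mult by lra; f_equal; field).
  assert (Hln := ln_lt_sub1 (3 / 4) ltac:(lra) ltac:(lra)).
  replace (2 / (1 / (1 / 2) + 1 / (3 / 2))) with (3 / 4) by field.
  replace (1 / (2 * (1 / 2)) + 1 / (2 * (3 / 2)) - 2 / (1 / 2 + 3 / 2)) with (1 / 3) by field.
  lra.
Qed.

(* lambda_0(1/2, 3/2) > 3/4 = H(1/2, 3/2) amounts to (3/2)^9 > 2^5. *)
Lemma counterexample_0 : exists a b, 0 < a /\ 0 < b /\ harmonic a b < lambda 0 a b.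
Proof.
  exists (1 / 2), (3 / 2). split; [lra|]. split; [lra|].
  unfold lambda, harmonic.
  destruct (Req_EM_T (1 / 2) (3 / 2)); [lra|].
  destruct (Req_EM_T 0 (-1)); [lra|].
  destruct (Req_EM_T 0 0); [|lra].
  replace ((1 / 2 + 3 / 2) / 2) with 1 by field. rewrite ln_1.
  replace (ln (1 / 2)) with (- ln 2) by (rewrite <- ln_Rinv by lra; f_equal; field).
  replace (2 / (1 / (1 / 2) + 1 / (3 / 2))) with (3 / 4) by field.
  assert (Hden : ln (3 / 2) < ln 2) by (apply ln_increasing; lra).
  assert (Hkey : 5 * ln 2 < 9 * ln (3 / 2)).
  { replace 5 with (INR 5) by (simpl; ring). replace 9 with (INR 9) by (simpl; ring).
    rewrite <- !ln_pow by lra. apply ln_increasing; [lra|]. simpl. lra. }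
  apply (Rlt_div_r (3 / 4)); lra.
Qed.

(* lambda_1(1/10, 19/10) > 81/200 > 19/100 = H(1/10, 19/10). *)
Lemma counterexample_1 : exists a b, 0 < a /\ 0 < b /\ harmonic a b < lambda 1 a b.
Proof.
  exists (1 / 10), (19 / 10). split; [lra|]. split; [lra|].
  unfold lambda, harmonic.
  destruct (Req_EM_T (1 / 10) (19 / 10)); [lra|].
  destruct (Req_EM_T 1 (-1)); [lra|].
  destruct (Req_EM_T 1 0); [lra|].
  destruct (Req_EM_T 1 1); [|lra].
  replace ((1 / 10 + 19 / 10) / 2) with 1 by field. rewrite ln_1.
  replace (2 / (1 / (1 / 10) + 1 / (19 / 10))) with (19 / 100) by field.
  assert (Ha1 := ln_lt_sub1 (1 / 10) ltac:(lra) ltac:(lra)).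
  assert (Ha2 := ln_gt_1_sub_inv (1 / 10) ltac:(lra) ltac:(lra)).
  assert (Hb1 := ln_lt_sub1 (19 / 10) ltac:(lra) ltac:(lra)).
  assert (Hb2 := ln_gt_1_sub_inv (19 / 10) ltac:(lra) ltac:(lra)).
  replace (/ (1 / 10)) with 10 in Ha2 by field.
  replace (/ (19 / 10)) with (10 / 19) in Hb2 by field.
  apply (Rlt_div_r (19 / 100)); lra.
Qed.

Lemma counterexample s : -4 < s ->
  exists a b, 0 < a /\ 0 < b /\ harmonic a b < lambda s a b.
Proof.
  intros Hs.
  destruct (Req_dec s (-1)) as [->|Hs1]; [exact counterexample_m1|].
  destruct (Req_dec s 0) as [->|Hs0]; [exact counterexample_0|].
  destruct (Req_dec s 1) as [->|Hs1']; [exact counterexample_1|].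
  exact (counterexample_generic s Hs Hs1 Hs0 Hs1').
Qed.

Theorem theorem3 (s : R) :
  (forall a b : R, 0 < a -> 0 < b -> lambda s a b <= harmonic a b) <-> s <= -4.
Proof.
  split.
  - intros Hineq. destruct (Rle_or_lt s (-4)) as [Hs|Hs]; [exact Hs|].
    destruct (counterexample s Hs) as (a & b & Ha & Hb & Hlt).
    specialize (Hineq a b Ha Hb). lra.
  - intros Hs a b Ha Hb. exact (sufficiency s a b Hs Ha Hb).
Qed.
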